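(* Let $d\ge1$ and $p\ge2$ be integers. There exists a constant $C>0$ depending only on $p$ such that the following holds. Let $s\ge p$ be an integer, $L,M>0$, and let $f:\mathbb{R}^d\to\mathbb{R}$ be a convex function with a minimizer $x^*$. Let $y_c=[v_c;x_c;t_c]\in\mathbb{R}^{2d+1}$ with $t_c\ge1$, and set $R=1/t_c$. Suppose that on the closed ball $B(x_c,R)=\{x:\|x-x_c\|\le R\}$ the function $f$ is $(s+1)$-times continuously differentiable and satisfies (i) $\|\nabla^{(i)} f(x)\|\le [L(f(x)-f(x^* ))]^{\frac{p-i}{p}}$ for all $x\in B(x_c,R)$, $i\in\{1,\dots,p-1\}$, and (ii) $\|\nabla^{(i)} f(x)\|\le M$ for all $x\in B(x_c,R)$, $i\in\{p,\dots,s+1\}$. Then for every $y\in U_{R,0.2}(y_c)$, $$\|\pi_{v,x}F(y)\|\le \frac{C\,(\mathcal{E}(y_c)+1)(L+M+1)}{t_c}.$$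
   Context: Points of $\mathbb{R}^{2d+1}$ are written $y=[v;x;t]$. The vector field $F:\mathbb{R}^{2d+1}\to\mathbb{R}^{2d+1}$ (defined for $t>0$) is $F([v;x;t])=\big[-\frac{2p+1}{t}v-p^2t^{p-2}\nabla f(x);\ v;\ 1\big]$, i.e. the first-order form of the ODE $\dot x=v$, $\dot v=-\frac{2p+1}{t}v-p^2t^{p-2}\nabla f(x)$, $\dot t=1$. The projection $\pi_{v,x}([v;x;t])=[v;x]\in\mathbb{R}^{2d}$. $U_{R,0.2}(y_c)=\{[v;x;t]:\|v-v_c\|\le R,\ \|x-x_c\|\le R,\ |t-t_c|\le0.2\}$. The Lyapunov function is $\mathcal{E}([v;x;t])=\frac{t^2}{4p^2}\|v\|^2+\|x+\frac{t}{2p}v-x^*\|^2+t^p(f(x)-f(x^* ))$. Norms of derivative tensors are operator norms. *)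

From HB Require Import structures.
From mathcomp Require Import all_boot all_order all_algebra.
From mathcomp Require Import all_classical all_reals all_analysis.
Set Implicit Arguments. Unset Strict Implicit. Unset Printing Implicit Defensive.
Import Order.TTheory GRing.Theory Num.Theory.
Import numFieldNormedType.Exports.
Local Open Scope classical_set_scope.
Local Open Scope ring_scope.

Section Defs.
Variables (R : realType) (d : nat).
Notation V := 'rV[R]_d.

Definition enorm (n : nat) (x : 'rV[R]_n) : R :=
  Num.sqrt (\sum_(i < n) x 0 i ^+ 2).

Definition cball (c : V) (r : R) : set V := [set x | enorm (x - c) <= r].

(* Iterated directional derivative: iderive f [:: h1; ...; hi] x
   = D^i f(x)[h1, ..., hi]. *)
Fixpoint iderive (f : V -> R) (hs : seq V) : V -> R :=
  match hs with
  | [::] => f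
  | h :: hs' => fun x => derive (iderive f hs') x h
  end.

Definition Ck_on (k : nat) (f : V -> R) (U : set V) : Prop :=
  forall hs : seq V,
    ((size hs <= k)%N -> forall x, U x -> continuous_at x (iderive f hs)) /\
    ((size hs < k)%N -> forall x, U x -> differentiable (iderive f hs) x).

(* "f is (k)-times continuously differentiable on the closed set K":
   f is C^k on some open set containing K. *)
Definition Ck_on_closed (k : nat) (f : V -> R) (K : set V) : Prop :=
  exists U : set V, open U /\ K `<=` U /\ Ck_on k f U.

(* Operator norm bound of the i-th derivative tensor at x (w.r.t. the
   Euclidean norm): || nabla^(i) f(x) || <= B, i.e.
   sup_{||h_j|| <= 1} |D^i f(x)[h_1,...,h_i]| <= B. *)
Definition opnorm_le (f : V -> R) (i : nat) (x : V) (B : R) : Prop :=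
  forall hs : seq V, size hs = i -> all (fun h => enorm h <= 1) hs ->
    `|iderive f hs x| <= B.

Definition grad (f : V -> R) (x : V) : V :=
  \row_(j < d) derive f x (delta_mx 0 j).

Definition convex_fun (f : V -> R) : Prop :=
  forall (x y : V) (l : R), 0 <= l <= 1 ->
    f (l *: x + (1 - l) *: y) <= l * f x + (1 - l) * f y.

Definition is_minimizer (f : V -> R) (xs : V) : Prop :=
  forall x, f xs <= f x.

(* Points y = [v; x; t] of R^{2d+1}, as triples. *)
Definition pt := (V * V * R)%type.

Definition Fvf (p : nat) (f : V -> R) (y : pt) : pt :=
  let: (v, x, t) := y in
  ((- (((2 * p + 1)%:R) / t)) *: v - ((p ^ 2)%:R * t ^+ (p - 2)) *: grad f x,
   v, 1).

Definition pi_vx (y : pt) : 'rV[R]_(d + d) :=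
  let: (v, x, _) := y in row_mx v x.

Definition Unbhd (r : R) (yc : pt) : set pt :=
  [set y | enorm (y.1.1 - yc.1.1) <= r /\ enorm (y.1.2 - yc.1.2) <= r
           /\ `|y.2 - yc.2| <= 1 / 5].

Definition Energy (p : nat) (f : V -> R) (xs : V) (y : pt) : R :=
  let: (v, x, t) := y in
  t ^+ 2 / (4 * (p ^ 2)%:R) * enorm v ^+ 2
  + enorm (x + (t / (2 * p%:R)) *: v - xs) ^+ 2
  + t ^+ p * (f x - f xs).

End Defs.

(* Write r = 1 / t_c.  The Lyapunov function controls the state at y_c:
   t_c^p (f(x_c) - min f) <= E(y_c) and t_c ||v_c|| <= 2p sqrt E(y_c).  By (i), the
   gap bound makes the derivatives of order i < p at x_c of size O(r^(p - i)), and by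
   (ii) the p-th derivative is bounded by M on the whole ball; integrating p - 1 times
   along the segment from x_c to x gives ||grad f(x)|| = O((E + 1)(L + M + 1) r^(p - 1)).
   As |t - t_c| <= 1/5 <= t_c / 5, t is comparable to t_c, so both components of F(y)
   are O((E + 1)(L + M + 1) r). *)

From HB Require Import structures.
From mathcomp Require Import all_boot all_order all_algebra.
From mathcomp Require Import all_classical all_reals all_analysis.
From mathcomp Require Import ring lra zify.
Import Order.TTheory GRing.Theory Num.Theory.
Import numFieldNormedType.Exports.
Local Open Scope classical_set_scope.
Local Open Scope ring_scope.
Set Implicit Arguments. Unset Strict Implicit.

Section EuclideanNorm.
Variable R : realType.

Lemma sqrtr_le_sqr (a b : R) : 0 <= b -> a <= b ^+ 2 -> Num.sqrt a <= b.
Proof.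
by move=> b0 ab; rewrite -(ger0_norm b0) -sqrtr_sqr ler_sqrt // sqr_ge0.
Qed.

Lemma enorm_ge0 n (x : 'rV[R]_n) : 0 <= enorm x.
Proof. exact: sqrtr_ge0. Qed.

Lemma enorm_sq n (x : 'rV[R]_n) : enorm x ^+ 2 = \sum_(i < n) x 0 i ^+ 2.
Proof. by rewrite sqr_sqrtr // sumr_ge0 // => i _; rewrite sqr_ge0. Qed.

Lemma enorm0 n : enorm (0 : 'rV[R]_n) = 0.
Proof. by rewrite /enorm big1 ?sqrtr0 // => i _; rewrite mxE expr0n. Qed.

Lemma enormZ n (c : R) (x : 'rV[R]_n) : enorm (c *: x) = `|c| * enorm x.
Proof.
rewrite /enorm -sqrtr_sqr -sqrtrM ?sqr_ge0 // mulr_sumr.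
by congr Num.sqrt; apply: eq_bigr => i _; rewrite mxE exprMn.
Qed.

Lemma enormN n (x : 'rV[R]_n) : enorm (- x) = enorm x.
Proof. by rewrite -scaleN1r enormZ normrN normr1 mul1r. Qed.

Lemma enormD_le2 n (x y : 'rV[R]_n) : enorm (x + y) <= 2 * (enorm x + enorm y).
Proof.
have := enorm_ge0 x; have := enorm_ge0 y => y0 x0.
apply: sqrtr_le_sqr; first lra.
have : \sum_(i < n) (x + y) 0 i ^+ 2 <= 2 * (enorm x ^+ 2 + enorm y ^+ 2).
  rewrite !enorm_sq -big_split mulr_sumr /=; apply: ler_sum => i _.
  rewrite mxE; have := sqr_ge0 (x 0 i - y 0 i); nra.
nra.
Qed.

Lemma enorm_row_mx_le n (x y : 'rV[R]_n) : enorm (row_mx x y) <= enorm x + enorm y.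
Proof.
have := enorm_ge0 x; have := enorm_ge0 y => y0 x0.
apply: sqrtr_le_sqr; first lra.
rewrite big_split_ord /=.
under eq_bigr do rewrite row_mxEl.
under [X in _ + X]eq_bigr do rewrite row_mxEr.
rewrite -!enorm_sq; nra.
Qed.

End EuclideanNorm.

Section Derivatives.
Variable R : realType.

Lemma is_derive_line n (G : 'rV[R]_n -> R) (a h : 'rV[R]_n) (s : R) :
  differentiable G (a + s *: h) ->
  is_derive s 1 (fun t : R => G (a + t *: h)) (derive G (a + s *: h) h).
Proof.
move=> dG.
have quotE : (fun t : R => t^-1 *: (((fun t => G (a + t *: h)) \o shift s) (t *: 1)
                                   - G (a + s *: h)))
           = (fun t : R => t^-1 *: ((G \o shift (a + s *: h)) (t *: h) - G (a + s *: h))).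
  apply/funext => t /=; congr (_ *: (G _ - _)).
  by rewrite /shift /= [t%:A]mulr1 scalerDl addrCA.
have -> : derive G (a + s *: h) h = derive (fun t : R => G (a + t *: h)) s 1.
  by rewrite /derive quotE.
by apply: derivableP; rewrite /derivable quotE; exact: diff_derivable.
Qed.

Lemma derivative_chain_bound (phi : nat -> R -> R) (n : nat) (r K M : R) :
  0 < r ->
  (forall k, (k < n)%N -> forall s, 0 <= s <= r -> is_derive s 1 (phi k) (phi k.+1 s)) ->
  (forall s, 0 <= s <= r -> `|phi n s| <= M) ->
  (forall k, (k < n)%N -> `|phi k 0| <= K * r ^+ (n - k)) ->
  forall j, (j <= n)%N -> forall s, 0 <= s <= r ->
    `|phi (n - j)%N s| <= (j%:R * K + M) * r ^+ j.
Proof.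
move=> r0 phi_deriv phi_top phi_init; elim=> [|j IH] jn s /andP[s0 sr].
  by rewrite subn0 expr0 mulr1 mul0r add0r phi_top ?s0.
set k := (n - j.+1)%N.
have kS : k.+1 = (n - j)%N by rewrite /k subnSK.
have kn : (k < n)%N by rewrite /k; lia.
have [c cI mvt] : exists2 c, c \in `[0, s] & phi k s - phi k 0 = phi k.+1 c * (s - 0).
  apply: MVT_segment => //.
    move=> y; rewrite in_itv /= => /andP[y0 ys].
    by apply: phi_deriv => //; apply/andP; split; lra.
  apply: derivable_within_continuous => y; rewrite in_itv /= => /andP[y0 ys].
  by have [] : is_derive y 1 (phi k) (phi k.+1 y) by apply: phi_deriv => //; lra.
have cr : 0 <= c <= r by move: cI; rewrite in_itv /= => /andP[c0 cs]; lra.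
have IHc := IH (ltnW jn) c cr; rewrite -kS in IHc.
have init := phi_init k kn; rewrite (_ : (n - k = j.+1)%N) in init; last by lia.
have -> : phi k s = phi k 0 + phi k.+1 c * s by rewrite subr0 in mvt; lra.
apply: (le_trans (ler_normD _ _)); rewrite normrM (ger0_norm s0).
have : `|phi k.+1 c| * s <= (j%:R * K + M) * r ^+ j * r.
  by apply: ler_pM => //; apply: le_trans IHc.
rewrite exprSr mulrSr; rewrite exprSr in init; lra.
Qed.

Lemma enorm_grad_le d (f : 'rV[R]_d -> R) (x : 'rV[R]_d) (B : R) :
  differentiable f x -> (forall e, enorm e <= 1 -> `|derive f x e| <= B) ->
  enorm (grad f x) <= B.
Proof.
move=> df dirB; set g := grad f x.
have [->|gn0] := eqVneq (enorm g) 0.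
  by apply: le_trans (normr_ge0 _) (dirB 0 _); rewrite enorm0.
have gp : 0 < enorm g by rewrite lt_def gn0 enorm_ge0.
have dir1 : enorm ((enorm g)^-1 *: g) <= 1.
  by rewrite enormZ ger0_norm ?invr_ge0 ?enorm_ge0 // mulVf.
have dg : 'd f x g = enorm g ^+ 2.
  rewrite {1}(row_sum_delta g) linear_sum enorm_sq; apply: eq_bigr => j _.
  by rewrite linearZ /= -deriveE // {2}/g /grad mxE expr2.
have := dirB _ dir1; rewrite deriveE // linearZ /= dg.
by rewrite -[_ *: _]/(_ * _) expr2 mulrA mulVf // mul1r ger0_norm // enorm_ge0.
Qed.

End Derivatives.

Section Powers.
Variable R : realType.

Lemma powR_le1D (b q : R) : 0 <= b -> 0 <= q <= 1 -> b `^ q <= 1 + b.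
Proof.
move=> b0 /andP[q0 q1].
have [b1|b1] := lerP 1 b; first by apply: le_trans (ler1_powR _ _) _ => //; lra.
have [->|bn0] := eqVneq b 0.
  by have [->|qn0] := eqVneq q 0; [rewrite powRr0 | rewrite powR0 //]; lra.
apply: (@le_trans _ _ (b `^ 0)); last by rewrite powRr0; lra.
by apply: ger_powR; rewrite // lt_def bn0 b0 ltW.
Qed.

Lemma powR_gap_le (L g E r : R) (p j : nat) : (0 < p)%N -> (j <= p)%N ->
  0 <= L -> 0 <= g -> 0 <= E -> 0 < r -> g <= E * r ^+ p ->
  (L * g) `^ (j%:R / p%:R) <= (1 + L * E) * r ^+ j.
Proof.
move=> p0 jp L0 g0 E0 r0 gE; set q := j%:R / p%:R.
have q0 : 0 <= q by rewrite divr_ge0 ?ler0n.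
have q1 : q <= 1 by rewrite ler_pdivrMr ?ltr0n // mul1r ler_nat.
have rp0 : 0 <= r ^+ p by rewrite exprn_ge0 // ltW.
apply: (@le_trans _ _ ((L * E * r ^+ p) `^ q)).
  by apply: ge0_ler_powR; rewrite ?nnegrE ?mulr_ge0 // -mulrA ler_wpM2l.
rewrite powRM ?mulr_ge0 //.
have -> : (r ^+ p) `^ q = r ^+ j.
  rewrite -powR_mulrn ?ltW // -powRrM /q mulrC divfK ?powR_mulrn ?ltW //.
  by rewrite pnatr_eq0 -lt0n.
by apply: ler_wpM2r; [rewrite exprn_ge0 ?ltW | rewrite powR_le1D ?mulr_ge0 ?q0].
Qed.

End Powers.

Section GradientOnBall.
Variables (R : realType) (d p s : nat) (L M : R) (f : 'rV[R]_d -> R).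
Variables (xs xc : 'rV[R]_d) (r : R).
Hypotheses (p_gt0 : (0 < p)%N) (p_le_s : (p <= s)%N) (L_ge0 : 0 <= L) (r_gt0 : 0 < r).
Hypothesis xs_min : is_minimizer f xs.
Hypothesis f_smooth : Ck_on_closed s.+1 f (cball xc r).
Hypothesis low_derivs : forall x, cball xc r x -> forall i : nat, (1 <= i <= p.-1)%N ->
  opnorm_le f i x ((L * (f x - f xs)) `^ ((p - i)%:R / p%:R)).
Hypothesis high_derivs : forall x, cball xc r x -> forall i : nat, (p <= i <= s.+1)%N ->
  opnorm_le f i x M.

(* phi k s = D^(k+1) f (xc + s h) [h, ..., h, e] with h = (x - xc) / r: at s = 0 the
   orders below p are controlled by the gap, and the order p by M on the whole segment. *)
Lemma enorm_grad_cball_le (E : R) (x : 'rV[R]_d) :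
  0 <= E -> f xc - f xs <= E * r ^+ p -> cball xc r x ->
  enorm (grad f x) <= (p.-1%:R * (1 + L * E) + M) * r ^+ p.-1.
Proof.
move=> E0 gapE xb; case: f_smooth => U [_ [ballU CU]].
have dif hs z : (size hs <= s)%N -> cball xc r z -> differentiable (iderive f hs) z.
  by move=> hs_s zb; apply: (CU hs).2 (ballU z zb).
apply: enorm_grad_le; first exact: (dif [::]).
move=> e e1; set h := r^-1 *: (x - xc).
have h1 : enorm h <= 1.
  rewrite enormZ ger0_norm ?invr_ge0 ?(ltW r_gt0) //.
  by rewrite mulrC ler_pdivrMr // mul1r.
have h0 := enorm_ge0 h.
have seg s0 : 0 <= s0 <= r -> cball xc r (xc + s0 *: h).
  by move=> /andP[s00 s0r]; rewrite /cball /= (addrC xc) addrK enormZ ger0_norm //; nra.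
have unit_dirs k : all (fun h0 => enorm h0 <= 1) (nseq k h ++ [:: e]).
  rewrite all_cat /= e1 !andbT.
  by apply/allP => z /nseqP[-> _].
have size_dirs k : size (nseq k h ++ [:: e]) = k.+1 by rewrite size_cat size_nseq addn1.
pose phi k s0 := iderive f (nseq k h ++ [:: e]) (xc + s0 *: h).
have phi_deriv k : (k < p.-1)%N -> forall s0, 0 <= s0 <= r ->
    is_derive s0 1 (phi k) (phi k.+1 s0).
  move=> kp s0 sr; apply: is_derive_line; apply: dif (seg s0 sr).
  by rewrite size_dirs; lia.
have phi_top s0 : 0 <= s0 <= r -> `|phi p.-1 s0| <= M.
  move=> sr; apply: (high_derivs (seg s0 sr) (i := p)); last exact: unit_dirs.
    by rewrite leqnn /=; lia.
  by rewrite size_dirs prednK.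
have phi_init k : (k < p.-1)%N -> `|phi k 0| <= (1 + L * E) * r ^+ (p.-1 - k).
  move=> kp; rewrite /phi scale0r addr0.
  have cbc : cball xc r xc by rewrite /cball /= subrr enorm0 ltW.
  have ik : (1 <= k.+1 <= p.-1)%N by apply/andP; split.
  apply: le_trans (low_derivs cbc ik (size_dirs k) (unit_dirs k)) _.
  rewrite (_ : (p - k.+1 = p.-1 - k)%N); last by lia.
  by apply: powR_gap_le => //; [lia | rewrite subr_ge0].
have := derivative_chain_bound r_gt0 phi_deriv phi_top phi_init (leqnn _) (s := r).
rewrite lexx ltW // subnn /phi /= scalerA mulfV ?gt_eqF // scale1r addrC subrK.
by apply.
Qed.

End GradientOnBall.

Section LyapunovFunction.
Variables (R : realType) (d p : nat) (f : 'rV[R]_d -> R) (xs : 'rV[R]_d).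
Hypothesis xs_min : is_minimizer f xs.

Lemma Energy_ge_gap v x (t : R) : 0 <= t ->
  t ^+ p * (f x - f xs) <= Energy p f xs (v, x, t).
Proof.
move=> t0; rewrite /Energy ler_wpDl // addr_ge0 ?sqr_ge0 //.
by rewrite !mulr_ge0 ?sqr_ge0 ?invr_ge0 ?mulr_ge0 ?ler0n ?enorm_ge0.
Qed.

Lemma Energy_ge_kinetic v x (t : R) : 0 <= t ->
  t ^+ 2 / (4 * (p ^ 2)%:R) * enorm v ^+ 2 <= Energy p f xs (v, x, t).
Proof.
move=> t0; rewrite /Energy -addrA ler_wpDr // addr_ge0 ?sqr_ge0 //.
by rewrite mulr_ge0 ?exprn_ge0 ?subr_ge0.
Qed.

Lemma Energy_ge0 v x (t : R) : 0 <= t -> 0 <= Energy p f xs (v, x, t).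
Proof.
move=> t0; apply: le_trans (Energy_ge_gap v x t0).
by rewrite mulr_ge0 ?exprn_ge0 ?subr_ge0.
Qed.

Lemma gap_le_Energy v x (t : R) : 0 < t ->
  f x - f xs <= Energy p f xs (v, x, t) / t ^+ p.
Proof.
move=> t0; rewrite ler_pdivlMr ?exprn_gt0 // mulrC.
exact: Energy_ge_gap (ltW t0).
Qed.

Lemma enorm_velocity_le v x (t : R) : (0 < p)%N -> 0 < t ->
  enorm v <= 2 * p%:R * (Energy p f xs (v, x, t) + 1) / t.
Proof.
move=> p0 t0; set E := Energy _ _ _ _.
have E0 : 0 <= E := Energy_ge0 v x (ltW t0).
have P0 : 0 < p%:R :> R by rewrite ltr0n.
have kin : (t * enorm v) ^+ 2 <= 4 * p%:R ^+ 2 * E.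
  have K0 : 0 < 4 * p%:R ^+ 2 :> R by rewrite mulr_gt0 ?exprn_gt0.
  have := Energy_ge_kinetic v x (ltW t0).
  by rewrite natrX mulrAC ler_pdivrMr // exprMn (mulrC _ E).
have rhs0 : 0 <= 2 * p%:R * (E + 1) by nra.
rewrite ler_pdivlMr // mulrC.
rewrite -ler_sqr ?nnegrE ?rhs0 ?mulr_ge0 ?enorm_ge0 ?(ltW t0) //.
apply: (le_trans kin); rewrite !exprMn.
have : 0 <= p%:R ^+ 2 :> R by rewrite exprn_ge0 ?ltW.
nra.
Qed.

Lemma enorm_velocity_near_le v vc xc (tc : R) : (0 < p)%N -> 0 < tc ->
  enorm (v - vc) <= 1 / tc ->
  enorm v <= (4 * p%:R + 2) * (Energy p f xs (vc, xc, tc) + 1) / tc.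
Proof.
move=> p0 tc0; rewrite mul1r => vb.
have := enorm_velocity_le vc xc p0 tc0.
have := divr_ge0 (Energy_ge0 vc xc (ltW tc0)) (ltW tc0).
have -> : v = vc + (v - vc) by rewrite addrC subrK.
move: (enormD_le2 vc (v - vc)); lra.
Qed.

End LyapunovFunction.

Lemma enorm_pi_Fvf_le (R : realType) d p (f : 'rV[R]_d -> R) v x (t : R) : 0 < t ->
  enorm (pi_vx (Fvf p f (v, x, t)))
    <= 2 * ((2 * p + 1)%:R / t * enorm v
            + (p ^ 2)%:R * t ^+ (p - 2) * enorm (grad f x)) + enorm v.
Proof.
move=> t0; rewrite /Fvf /pi_vx /=.
apply: le_trans (enorm_row_mx_le _ _) _; rewrite lerD2r.
apply: le_trans (enormD_le2 _ _) _.
by rewrite enormN !enormZ normrN !ger0_norm ?mulr_ge0 ?exprn_ge0 ?invr_ge0 ?ler0n ?(ltW t0).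
Qed.

Lemma enorm_pi_Fvf_near_le (R : realType) d p (f : 'rV[R]_d -> R) v x (t tc a b : R) :
  (1 < p)%N -> 1 <= tc -> `|t - tc| <= 1 / 5 ->
  enorm v <= a / tc -> enorm (grad f x) <= b / tc ^+ p.-1 ->
  enorm (pi_vx (Fvf p f (v, x, t)))
    <= ((8 * p%:R + 5) * a + 2 * p%:R ^+ 2 * 2 ^+ (p - 2) * b) / tc.
Proof.
move=> p1 tc1; rewrite ler_norml => /andP[tb1 tb2] v_le g_le.
have pm : p.-1 = (p - 2).+1 by lia.
have tc0 : 0 < tc by lra.
have t0 : 0 < t by lra.
have P0 : 0 <= p%:R :> R by rewrite ler0n.
apply: le_trans (enorm_pi_Fvf_le p f v x t0) _.
have v_term : (2 * p + 1)%:R / t * enorm v <= 2 * (2 * p%:R + 1) * (a / tc).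
  rewrite natrD natrM; apply: ler_pM => //.
  - by rewrite divr_ge0 ?(ltW t0) //; lra.
  - exact: enorm_ge0.
  - by rewrite ler_pdivrMr //; nra.
have g_term : (p ^ 2)%:R * t ^+ (p - 2) * enorm (grad f x)
              <= p%:R ^+ 2 * 2 ^+ (p - 2) * b / tc.
  have t_pow : t ^+ (p - 2) <= 2 ^+ (p - 2) * tc ^+ (p - 2).
    by rewrite -exprMn; apply: lerXn2r; rewrite ?nnegrE; lra.
  have tc_pow : tc ^+ (p - 2) / tc ^+ p.-1 = tc^-1.
    by rewrite pm exprS invfM mulrCA mulfV ?mulr1 // expf_neq0 // gt_eqF.
  have -> : p%:R ^+ 2 * 2 ^+ (p - 2) * b / tc
            = p%:R ^+ 2 * (2 ^+ (p - 2) * tc ^+ (p - 2)) * (b / tc ^+ p.-1).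
    by rewrite -tc_pow; ring.
  rewrite natrX; apply: ler_pM.
  - by rewrite mulr_ge0 ?exprn_ge0 ?(ltW t0).
  - exact: enorm_ge0.
  - by apply: ler_wpM2l; rewrite ?exprn_ge0.
  - exact: g_le.
lra.
Qed.

Lemma gradient_coef_le (R : realType) (n : nat) (L M E : R) :
  (0 < n)%N -> 0 <= L -> 0 <= M -> 0 <= E ->
  n.-1%:R * (1 + L * E) + M <= n%:R * ((E + 1) * (L + M + 1)).
Proof.
move=> n0 L0 M0 E0; rewrite -[in n%:R](prednK n0) -natr1.
have : 0 <= n.-1%:R :> R by rewrite ler0n.
set W := (E + 1) * (L + M + 1).
have : 1 + L * E <= W by rewrite /W; nra.
have : M <= W by rewrite /W; nra.
nra.
Qed.

Unset Implicit Arguments. Set Strict Implicit.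

Theorem mainTheorem2 (R : realType) (p : nat) (hp : (2 <= p)%N) :
  exists C : R, 0 < C /\
  forall (d s : nat) (L M : R) (f : 'rV[R]_d -> R) (xs : 'rV[R]_d)
         (vc xc : 'rV[R]_d) (tc : R),
    (1 <= d)%N -> (p <= s)%N -> 0 < L -> 0 < M ->
    convex_fun f -> is_minimizer f xs ->
    1 <= tc ->
    Ck_on_closed s.+1 f (cball xc (1 / tc)) ->
    (forall x, cball xc (1 / tc) x -> forall i : nat, (1 <= i <= p.-1)%N ->
       opnorm_le f i x ((L * (f x - f xs)) `^ ((p - i)%:R / p%:R))) ->
    (forall x, cball xc (1 / tc) x -> forall i : nat, (p <= i <= s.+1)%N ->
       opnorm_le f i x M) ->
    forall y : pt R d, Unbhd (1 / tc) (vc, xc, tc) y ->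
      enorm (pi_vx (Fvf p f y))
        <= C * (Energy p f xs (vc, xc, tc) + 1) * (L + M + 1) / tc.
Proof.
have p0 : (0 < p)%N by lia.
set P : R := p%:R; set Q : R := 2 ^+ (p - 2).
have P2 : 2 <= P by rewrite ler_nat.
exists ((8 * P + 5) * (4 * P + 2) + 2 * P ^+ 2 * Q * P); split.
  have : 0 <= P ^+ 2 * Q by rewrite mulr_ge0 ?exprn_ge0 //; lra.
  nra.
move=> d s L M f xs vc xc tc _ ps L0 M0 _ xs_min tc1 f_smooth low high.
move=> [[v x] t] [vb [xb tb]]; rewrite /= in vb xb tb.
set E := Energy p f xs (vc, xc, tc); set W := (E + 1) * (L + M + 1).
have tc0 : 0 < tc by lra.
have E0 : 0 <= E := Energy_ge0 p xs_min vc xc (ltW tc0).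
have v_le : enorm v <= (4 * P + 2) * W / tc.
  apply: le_trans (enorm_velocity_near_le xs_min xc p0 tc0 vb) _.
  by rewrite -/P -/E ler_pM2r ?invr_gt0 // ler_pM2l /W; nra.
have g_le : enorm (grad f x) <= P * W / tc ^+ p.-1.
  have gap : f xc - f xs <= E * (1 / tc) ^+ p.
    by rewrite expr_div_n expr1n mul1r; exact: gap_le_Energy.
  apply: le_trans (enorm_grad_cball_le p0 ps (ltW L0) (divr_gt0 ltr01 tc0) xs_min
                     f_smooth low high E0 gap xb) _.
  rewrite expr_div_n expr1n mul1r ler_pM2r ?invr_gt0 ?exprn_gt0 //.
  exact: gradient_coef_le p0 (ltW L0) (ltW M0) E0.
apply: le_trans (enorm_pi_Fvf_near_le hp tc1 tb v_le g_le) _.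
by rewrite -/P -/Q /W le_eqVlt; apply/orP; left; apply/eqP; ring.
Qed.
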